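(* Assume (H1), (H2)(i) and (H2)(ii) described in the context, and set $l:=h+k$. Then for every $\sigma>0$ there is a constant $C_\sigma>0$ such that $$|H(x,s,t)|\le l(x)\big[\sigma(\Phi(s)+\Psi(t))+C_\sigma\big]\quad\text{for all }(x,s,t)\in\mathbb{R}^N\times(0,+\infty)^2.$$
   Context: Notation: $N\ge2$, $\mathbb{R}_+=(0,+\infty)$. A Young function is a convex $\Lambda:[0,\infty)\to[0,\infty)$ with $\Lambda(t)=0$ iff $t=0$, $\lim_{t\to0^+}\Lambda(t)/t=0$, $\lim_{t\to\infty}\Lambda(t)/t=\infty$; $\overline{\Lambda}(t)=\max_{s\ge0}\{st-\Lambda(s)\}$; for differentiable $\Lambda$, $s_\Lambda=\sup_{t>0}t\Lambda'(t)/\Lambda(t)$. $\Lambda_1\ll\Lambda_2$ means $\lim_{t\to\infty}\Lambda_1(t)/\Lambda_2(\eta t)=0$ for every $\eta>0$. Setting: $\Phi,\Psi$ Young functions, $\phi=\Phi'$, $\psi=\Psi'$; $f,g:\mathbb{R}_+\times\mathbb{R}_+\to\mathbb{R}_+$ continuous; $h,k:\mathbb{R}^N\to\mathbb{R}_+$ measurable. (H1) $\Phi,\Psi$ are $C^2$, $0<\inf_{t>0}\frac{t\phi'(t)}{\phi(t)}\le\sup_{t>0}\frac{t\phi'(t)}{\phi(t)}<\infty$, the same for $\psi$, and $\max\{s_\Phi,s_\Psi\}<N$. (H2)(i) $H:\mathbb{R}^N\times\mathbb{R}_+\times\mathbb{R}_+\to\mathbb{R}$ is measurable in $x$, $C^1$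 in $(s,t)$, with $\partial_sH(x,s,t)=h(x)f(s,t)$, $\partial_tH(x,s,t)=k(x)g(s,t)$, $H(\cdot,0,0)\equiv0$. (H2)(ii) There are differentiable Young functions $\Upsilon_1,\Upsilon_2,\Gamma_1,\Gamma_2$ with $\Upsilon_1\ll\Phi$, $\Gamma_2\ll\Psi$, constants $C>0$, $\alpha,\beta\in(0,1)$ such that for all $s,t>0$: $f(s,t)\le C[(s^{-\alpha}+1)(\Upsilon_2(t)/t+1)+\Upsilon_1(s)/s]$, $g(s,t)\le C[(t^{-\beta}+1)(\Gamma_1(s)/s+1)+\Gamma_2(t)/t]$; and $\overline{\Phi}\ll\Psi\circ\Upsilon_2^{-1}\circ\overline{\Upsilon}_2$, $\overline{\Psi}\ll\Phi\circ\Gamma_1^{-1}\circ\overline{\Gamma}_1$. *)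

From HB Require Import structures.
From mathcomp Require Import all_boot all_order all_algebra.
From mathcomp Require Import all_classical all_reals all_analysis.
Set Implicit Arguments. Unset Strict Implicit. Unset Printing Implicit Defensive.
Import Order.TTheory GRing.Theory Num.Theory.
Import numFieldNormedType.Exports.
Local Open Scope classical_set_scope.
Local Open Scope ring_scope.

Section Defs.
Variable R : realType.

(* Young function, given as a function R -> R whose behaviour on [0,oo) matters. *)
Definition young (L : R -> R) : Prop :=
  [/\ (forall x y l, 0 <= x -> 0 <= y -> 0 <= l <= 1 ->
         L (l * x + (1 - l) * y) <= l * L x + (1 - l) * L y),
      (forall t, 0 <= t -> 0 <= L t),
      (forall t, 0 <= t -> (L t = 0 <-> t = 0)),
      (fun t => L t / t) @ 0^'+ --> 0 &
      (fun t => L t / t) @ +oo --> +oo ].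

Definition young_conj (L : R -> R) (t : R) : R :=
  sup [set y | exists2 s, 0 <= s & y = s * t - L s].

(* inverse of a Young function on [0,oo) (generalized inverse; coincides with
   the inverse since a Young function is an increasing bijection of [0,oo)) *)
Definition young_inv (L : R -> R) (y : R) : R :=
  sup [set t | 0 <= t /\ L t <= y].

Definition sindex (L : R -> R) : \bar R :=
  ereal_sup [set ((t * derive1 L t / L t)%:E) | t in [set t | 0 < t]].

Definition lless (L1 L2 : R -> R) : Prop :=
  forall eta : R, 0 < eta -> (fun t => L1 t / L2 (eta * t)) @ +oo --> (0 : R).

Definition C2_pos (F : R -> R) : Prop :=
  [/\ (forall t, 0 < t -> derivable F t 1),
      (forall t, 0 < t -> derivable (derive1 F) t 1) &
      (forall t, 0 < t -> {for t, continuous (derive1 (derive1 F))})].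

(* 0 < inf_{t>0} t F''(t)/F'(t) <= sup_{t>0} t F''(t)/F'(t) < oo *)
Definition index_bounds (F : R -> R) : Prop :=
  exists a b : R, 0 < a /\
    forall t, 0 < t ->
      a <= t * derive1 (derive1 F) t / derive1 F t <= b.

Definition RN_measurable (N : nat) (u : 'rV[R]_N -> R) : Prop :=
  forall A : set R, measurable A ->
    (<<s [set U : set 'rV[R]_N | open U] >>) (u @^-1` A).

End Defs.

(* Integrating from a small diagonal point (e,e)
   horizontally to (s,e) and then vertically to (s,t), the growth bounds on f and g
   give |H(x,s,t)| <= h(x) A(s) + k(x) B(s,t), where A and B are built from
   s^(1-alpha), s, Ups1(s), the slope Gam1(s)/s, t^(1-beta), t and Gam2(t).  At
   height e -> 0 we have Ups2(e) <= e, so the f-bound loses its dependence on t.  Each term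
   of A and B is bounded by d (Phi(s) + Psi(t)) + K_d for every d > 0: the
   one-variable terms by Ups1 << Phi, Gam2 << Psi and superlinearity, and the mixed
   term t Gam1(s)/s by Young's inequality for Psi, since the conjugate of Psi is
   eventually below Phi(Gam1^-1(conj Gam1(Gam1(s)/s))) <= Phi(s). *)

From HB Require Import structures.
From mathcomp Require Import all_boot all_order all_algebra.
From mathcomp Require Import all_classical all_reals all_analysis.
From mathcomp Require Import ring lra.
Import Order.TTheory GRing.Theory Num.Theory.
Import numFieldNormedType.Exports.
Local Open Scope classical_set_scope.
Local Open Scope ring_scope.

Set Implicit Arguments. Unset Strict Implicit. Unset Printing Implicit Defensive.

Section Absorption.
Variables (R : realType) (T : Type) (D : set T) (V : T -> R).

Definition absorbs (Q : T -> R) :=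
  forall d, 0 < d -> exists K, forall p, D p -> Q p <= d * V p + K.

Lemma absorbs_le (Q Q' : T -> R) :
  (forall p, D p -> Q' p <= Q p) -> absorbs Q -> absorbs Q'.
Proof.
move=> Q'Q absQ d d0; have [K HK] := absQ d d0.
by exists K => p Dp; apply: le_trans (Q'Q p Dp) (HK p Dp).
Qed.

Lemma absorbsD (Q1 Q2 : T -> R) :
  absorbs Q1 -> absorbs Q2 -> absorbs (fun p => Q1 p + Q2 p).
Proof.
move=> abs1 abs2 d d0; have d20 : 0 < d / 2 by rewrite divr_gt0.
have [K1 HK1] := abs1 _ d20; have [K2 HK2] := abs2 _ d20.
exists (K1 + K2) => p Dp; have := HK1 p Dp; have := HK2 p Dp.
have -> : d * V p = d / 2 * V p + d / 2 * V p by field.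
lra.
Qed.

Lemma absorbsZ (c : R) (Q : T -> R) :
  0 < c -> absorbs Q -> absorbs (fun p => c * Q p).
Proof.
move=> c0 absQ d d0; have [K HK] := absQ (d / c) (divr_gt0 d0 c0).
exists (c * K) => p Dp; have := ler_wpM2l (ltW c0) (HK p Dp).
by rewrite mulrDr mulrA mulrCA divff ?gt_eqF // mulr1.
Qed.

Lemma absorbs_max (Q1 Q2 : T -> R) :
  absorbs Q1 -> absorbs Q2 -> absorbs (fun p => Num.max (Q1 p) (Q2 p)).
Proof.
move=> abs1 abs2 d d0; have [K1 HK1] := abs1 d d0; have [K2 HK2] := abs2 d d0.
exists (Num.max K1 K2) => p Dp; rewrite ge_max; apply/andP; split.
- by apply: le_trans (HK1 p Dp) _; rewrite lerD2l le_max lexx.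
- by apply: le_trans (HK2 p Dp) _; rewrite lerD2l le_max lexx orbT.
Qed.

Lemma absorbs_gt0 (Q : T -> R) : absorbs Q ->
  forall d, 0 < d -> exists2 K, 0 < K & forall p, D p -> Q p <= d * V p + K.
Proof.
move=> absQ d d0; have [K HK] := absQ d d0.
exists (Num.max K 1); first by rewrite lt_max ltr01 orbT.
by move=> p Dp; apply: le_trans (HK p Dp) _; rewrite lerD2l le_max lexx.
Qed.

Hypothesis V_ge0 : forall p, D p -> 0 <= V p.

Lemma absorbs_cst (c : R) : absorbs (fun=> c).
Proof.
move=> d d0; exists c => p Dp.
by rewrite lerDr mulr_ge0 ?V_ge0 // ltW.
Qed.

End Absorption.

Lemma absorbs_comp (R : realType) (T T' : Type) (D : set T) (D' : set T')
    (V : T -> R) (V' : T' -> R) (m : T -> T') (c : R) (Q : T' -> R) :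
  (forall p, D p -> D' (m p)) -> (forall p, D p -> V' (m p) <= V p + c) ->
  absorbs D' V' Q -> absorbs D V (Q \o m).
Proof.
move=> Dm Vm absQ d d0; have [K HK] := absQ d d0.
exists (d * c + K) => p Dp; apply: le_trans (HK _ (Dm p Dp)) _.
by rewrite addrA -mulrDr lerD2r ler_pM2l // Vm.
Qed.

Section YoungFunctions.
Variables (R : realType) (L : R -> R).
Hypothesis YL : young L.

Lemma young0 : L 0 = 0.
Proof. by case: YL => _ _ L0 _ _; apply/(L0 0 (lexx _)). Qed.

Lemma young_ge0 t : 0 <= t -> 0 <= L t.
Proof. by case: YL => _ L_ge0 _ _ _; apply: L_ge0. Qed.

Lemma young_gt0 t : 0 < t -> 0 < L t.
Proof.
move=> t0; rewrite lt_def young_ge0 ?ltW// andbT; apply/eqP => Lt0.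
case: YL => _ _ L0 _ _; have t_eq0 := proj1 (L0 t (ltW t0)) Lt0.
by rewrite t_eq0 ltxx in t0.
Qed.

Lemma young_le_scale r s : 0 <= r <= s -> 0 < s -> L r <= r / s * L s.
Proof.
move=> /andP[r0 rs] s0; case: YL => convL _ _ _ _.
have rs01 : 0 <= r / s <= 1.
  by apply/andP; split; [rewrite divr_ge0 // ltW | rewrite ler_pdivrMr // mul1r].
have := convL s 0 (r / s) (ltW s0) (lexx _) rs01.
by rewrite mulr0 addr0 divfK ?gt_eqF// young0 mulr0 addr0.
Qed.

Lemma young_slope_le r s : 0 < r <= s -> L r / r <= L s / s.
Proof.
move=> /andP[r0 rs]; have s0 := lt_le_trans r0 rs.
rewrite ler_pdivrMr// [_ * r]mulrC mulrA mulrAC; apply: young_le_scale s0.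
by rewrite ltW.
Qed.

Lemma young_le r s : 0 <= r <= s -> L r <= L s.
Proof.
move=> /andP[r0 rs]; have [s0|] := ltP 0 s.
  apply: le_trans (young_le_scale _ s0) _; first by rewrite r0.
  by rewrite ler_piMl ?young_ge0 ?(ltW s0) // ler_pdivrMr // mul1r.
by move=> s_le0; rewrite (@le_anti _ _ r s) ?rs ?(le_trans s_le0 r0).
Qed.

Lemma young_lt r s : 0 <= r < s -> L r < L s.
Proof.
move=> /andP[r0 rs]; have s0 := le_lt_trans r0 rs.
apply: le_lt_trans (young_le_scale _ s0) _; first by rewrite r0 (ltW rs).
by rewrite gtr_pMl ?young_gt0// ltr_pdivrMr// mul1r.
Qed.

Lemma young_superlinear M : exists2 T, 0 < T & forall r, T <= r -> M * r <= L r.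
Proof.
case: YL => _ _ _ _ /cvgryPge /(_ M) [T [_ HT]].
have T0 : 0 < Num.max T 0 + 1 by rewrite ltr_wpDl ?le_max ?lexx ?orbT.
exists (Num.max T 0 + 1) => // r Tr; have r0 := lt_le_trans T0 Tr.
rewrite -ler_pdivlMr//; apply: HT; apply: lt_le_trans Tr.
by rewrite ltr_pwDr// le_max lexx.
Qed.

Lemma young_sublinear0 e : 0 < e -> exists2 d, 0 < d & forall r, 0 < r < d -> L r <= e * r.
Proof.
case: YL => _ _ _ /cvgrPdist_le /(_ e) + _ e0 => /(_ e0) [d /= d0 Hd].
exists d => // r /andP[r0 rd]; rewrite -ler_pdivrMr//.
have := Hd r; rewrite /ball_ /= sub0r normrN (ger0_norm (ltW r0)) => /(_ rd r0).
by rewrite sub0r normrN; apply: le_trans (ler_norm _).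
Qed.

Lemma absorbs_young_id : absorbs [set r : R | 0 < r] L id.
Proof.
move=> d d0; have [T T0 HT] := young_superlinear d^-1.
exists T => r r0 /=; have [rT|Tr] := leP r T.
  by apply: le_trans rT _; rewrite lerDr mulr_ge0 ?young_ge0 ?ltW.
have := HT r (ltW Tr); rewrite -(ler_pM2l d0) mulrA mulfV ?gt_eqF // mul1r.
by have := ltW T0; lra.
Qed.

Lemma young_conj_has_ubound u : 0 <= u ->
  has_ubound [set y | exists2 r, 0 <= r & y = r * u - L r].
Proof.
move=> u0; have [T T0 HT] := young_superlinear u.
exists (T * u) => _ [r r0 ->]; have [rT|Tr] := leP r T.
  have := young_ge0 r0; have : r * u <= T * u by rewrite ler_wpM2r.
  lra.
have := HT r (ltW Tr); have : 0 <= T * u by rewrite mulr_ge0 // ltW.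
rewrite [u * r]mulrC; lra.
Qed.

Lemma fenchel_young r u : 0 <= r -> 0 <= u -> r * u <= L r + young_conj L u.
Proof.
move=> r0 u0; have := ub_le_sup (young_conj_has_ubound u0) (ex_intro2 _ _ r r0 erefl).
by rewrite -/(young_conj L u); lra.
Qed.

Lemma young_conj_ge0 u : 0 <= u -> 0 <= young_conj L u.
Proof. by move=> u0; have := fenchel_young (lexx 0) u0; rewrite young0 mul0r add0r. Qed.

Lemma young_conj_le u v : 0 <= u <= v -> young_conj L u <= young_conj L v.
Proof.
move=> /andP[u0 uv]; apply: ge_sup; first by exists (0 * u - L 0), 0.
move=> _ [r r0 ->]; have := fenchel_young r0 (le_trans u0 uv).
have : r * u <= r * v by rewrite ler_wpM2l.
lra.
Qed.

Lemma young_conj_gt0 v : 0 < v -> 0 < young_conj L v.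
Proof.
move=> v0; have [d d0 Hd] := young_sublinear0 (divr_gt0 v0 (ltr0n _ 2)).
have r0 : 0 < d / 2 by rewrite divr_gt0.
have rd : d / 2 < d by rewrite ltr_pdivrMr // ltr_pMr // ltr1n.
have := Hd (d / 2); rewrite r0 rd => /(_ isT) Lr.
have := fenchel_young (ltW r0) (ltW v0).
have : 0 < d / 2 * v by rewrite mulr_gt0.
rewrite [v / 2 * _]mulrC mulrA in Lr; lra.
Qed.

Lemma young_conj_slope_le s : 0 < s -> young_conj L (L s / s) <= L s.
Proof.
move=> s0; apply: ge_sup; first by exists (0 * (L s / s) - L 0), 0.
move=> _ [r r0 ->]; have [rs|sr] := leP r s.
  have : r * (L s / s) <= s * (L s / s).
    by apply: ler_wpM2r; rewrite // divr_ge0 ?young_ge0 // ltW.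
  rewrite [s * _]mulrC divfK ?gt_eqF //; have := young_ge0 r0; lra.
have r0' := lt_trans s0 sr.
have := young_slope_le (_ : 0 < s <= r); rewrite s0 ltW // => /(_ isT).
rewrite (ler_pdivlMr _ _ r0') [_ * r]mulrC; have := young_gt0 s0; lra.
Qed.

Lemma young_sublevel_ub y s : 0 < s -> y <= L s -> ubound [set t | 0 <= t /\ L t <= y] s.
Proof.
move=> s0 ys t [t0 Lt]; rewrite leNgt; apply/negP => st.
by have := young_lt (_ : 0 <= s < t); rewrite ltW // st => /(_ isT); lra.
Qed.

Lemma young_inv_le y s : 0 <= y -> 0 < s -> y <= L s -> young_inv L y <= s.
Proof.
move=> y0 s0 ys; apply: ge_sup; last exact: young_sublevel_ub.
by exists 0; split => //; rewrite young0.
Qed.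

Lemma young_inv_gt0 y : 0 < y -> 0 < young_inv L y.
Proof.
move=> y0; have [T T0 HT] := young_superlinear 1.
have Ty0 : 0 < T + y by rewrite addr_gt0.
have yL : y <= L (T + y).
  by apply: le_trans (HT _ _); rewrite ?mul1r ?lerDr ?lerDl ltW.
have [d d0 Hd] := young_sublinear0 ltr01.
pose t := Num.min d y / 2.
have md0 : 0 < Num.min d y by rewrite lt_min d0.
have t0 : 0 < t by rewrite divr_gt0.
have tm : t < Num.min d y by rewrite ltr_pdivrMr // ltr_pMr // ltr1n.
have td : t < d by apply: lt_le_trans tm _; rewrite ge_min lexx.
have ty : t < y by apply: lt_le_trans tm _; rewrite ge_min lexx orbT.
have Lt : L t <= y by have := Hd t; rewrite t0 td mul1r => /(_ isT); lra.
apply: (lt_le_trans t0); apply: ub_le_sup; last by split => //; exact: ltW.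
by exists (T + y); apply: young_sublevel_ub.
Qed.

Lemma young_inv_conj_slope_le s : 0 < s -> young_inv L (young_conj L (L s / s)) <= s.
Proof.
move=> s0; apply: young_inv_le => //; last exact: young_conj_slope_le.
by apply: young_conj_ge0; rewrite divr_ge0 ?young_ge0 ?ltW.
Qed.

End YoungFunctions.

Section SlowerGrowth.
Variable R : realType.

Lemma lless_eventually_le (L1 L2 : R -> R) (eta eps : R) :
  lless L1 L2 -> 0 < eta -> 0 < eps -> (forall u, 0 < u -> 0 < L2 u) ->
  exists2 T, 0 < T & forall u, T < u -> L1 u <= eps * L2 (eta * u).
Proof.
move=> ll eta0 eps0 L2_gt0.
have /cvgrPdist_le /(_ eps eps0) [M [_ HM]] := ll eta eta0.
have M0 : 0 <= Num.max M 0 by rewrite le_max lexx orbT.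
exists (Num.max M 0 + 1) => [|u Mu]; first by rewrite ltr_wpDl.
have u0 : 0 < u by apply: le_lt_trans Mu; rewrite addr_ge0.
have := HM u; rewrite /= sub0r normrN => /(_ _) /(le_trans (ler_norm _)).
rewrite ler_pdivrMr ?L2_gt0 ?mulr_gt0 // mulrC; apply.
by apply: le_lt_trans Mu; rewrite ler_wpDr // le_max lexx.
Qed.

Lemma absorbs_lless (L1 L2 : R -> R) : young L1 -> young L2 -> lless L1 L2 ->
  absorbs [set r : R | 0 < r] L2 L1.
Proof.
move=> Y1 Y2 ll d d0.
have [T T0 HT] := lless_eventually_le ll ltr01 d0 (young_gt0 Y2).
exists (L1 T) => r r0 /=; have [rT|Tr] := leP r T.
  apply: le_trans (young_le Y1 (_ : 0 <= r <= T)) _; first by rewrite rT (ltW r0).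
  by rewrite lerDr mulr_ge0 ?young_ge0 ?ltW.
by apply: le_trans (HT r Tr) _; rewrite mul1r lerDl young_ge0 // ltW.
Qed.

Lemma absorbs_cross (Phi Psi Gam : R -> R) :
  young Phi -> young Psi -> young Gam ->
  lless (young_conj Psi) (Phi \o young_inv Gam \o young_conj Gam) ->
  absorbs [set p : R * R | 0 < p.1 /\ 0 < p.2] (fun p => Phi p.1 + Psi p.2)
    (fun p => p.2 * (Gam p.1 / p.1)).
Proof.
move=> YPhi YPsi YGam ll d d0.
have comp_gt0 u : 0 < u -> 0 < (Phi \o young_inv Gam \o young_conj Gam) u.
  by move=> u0; rewrite /= young_gt0 ?young_inv_gt0 ?young_conj_gt0.
have [T T0 HT] := lless_eventually_le ll d0 ltr01 comp_gt0.
exists (d * young_conj Psi T) => -[s t] [/= s0 t0].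
pose u := Gam s / s / d.
have u0 : 0 <= u by rewrite !divr_ge0 ?young_ge0 ?ltW.
have conj_u : young_conj Psi u <= Phi s + young_conj Psi T.
  have [uT|Tu] := leP u T.
    apply: ler_wpDl; first exact: young_ge0 (ltW s0).
    by apply: young_conj_le => //; rewrite u0.
  apply: le_trans (HT u Tu) _; rewrite mul1r /= mulrC divfK ?gt_eqF //.
  apply: ler_wpDr; first by apply: young_conj_ge0 => //; exact: ltW.
  have a0 : 0 < Gam s / s by rewrite divr_gt0 ?young_gt0.
  have inv_gt0 := young_inv_gt0 YGam (young_conj_gt0 YGam a0).
  apply: (young_le YPhi); rewrite (ltW inv_gt0) /=.
  exact: young_inv_conj_slope_le.
have := fenchel_young YPsi (ltW t0) u0.
have -> : t * (Gam s / s) = d * (t * u) by rewrite /u; field; rewrite !gt_eqF.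
rewrite -(ler_pM2l d0) => /le_trans; apply.
by rewrite -mulrDr ler_pM2l //; lra.
Qed.

End SlowerGrowth.

Section Calculus.
Variable R : realType.

Lemma increment_le_of_derive (F G dF dG : R -> R) (a b : R) : a < b ->
  (forall r, a <= r <= b -> is_derive r 1 F (dF r)) ->
  (forall r, a <= r <= b -> is_derive r 1 G (dG r)) ->
  (forall r, a < r < b -> dF r <= dG r) -> F b - F a <= G b - G a.
Proof.
move=> ab dF_F dG_G dFG.
have dGF r : a <= r <= b -> is_derive r 1 (G - F) (dG r - dF r).
  by move=> rab; apply: is_deriveB; [exact: dG_G | exact: dF_F].
have [||c] := @MVT R (G - F) (fun r => dG r - dF r) a b ab.
- by move=> r; rewrite in_itv /= => /andP[ar rb]; apply: dGF; rewrite !ltW.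
- apply: derivable_within_continuous => r; rewrite in_itv /= => rab.
  exact: (@ex_derive _ _ _ _ _ _ _ (dGF r rab)).
rewrite in_itv /= => /andP[ac cb] GF.
have : 0 <= (dG c - dF c) * (b - a) by rewrite mulr_ge0 // subr_ge0 ?dFG ?ac // ltW.
have {}GF : G b - F b - (G a - F a) = (dG c - dF c) * (b - a) by exact: GF.
by rewrite -GF; lra.
Qed.

Definition antider_pow (g r : R) := r `^ (1 - g) / (1 - g) + r.

Lemma is_derive_antider_pow (g r : R) : g < 1 -> 0 < r ->
  is_derive r 1 (antider_pow g) (r `^ (- g) + 1).
Proof.
move=> g1 r0; have := is_derive1_powR (1 - g) r0.
have -> : 1 - g - 1 = - g by ring.
move=> Dpow; apply: is_derive_eq.
by rewrite scaler0 add0r /GRing.scale /= mulrA mulVf ?mul1r // subr_eq0 eq_sym lt_eqF.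
Qed.

Lemma antider_pow_ge0 (g r : R) : g < 1 -> 0 <= r -> 0 <= antider_pow g r.
Proof.
by move=> g1 r0; rewrite addr_ge0 // divr_ge0 ?powR_ge0 // subr_ge0 ltW.
Qed.

Lemma increment_le_antider_pow (P dP : R -> R) (g c K e s : R) :
  g < 1 -> 0 < e < s -> 0 <= c -> 0 <= K ->
  (forall r, e <= r <= s -> is_derive r 1 P (dP r)) ->
  (forall r, e < r < s -> 0 <= dP r <= c * (r `^ (- g) + 1) + K) ->
  0 <= P s - P e <= c * antider_pow g s + K * s.
Proof.
move=> g1 /andP[e0 es] c0 K0 dP_P dP_bd.
have r0 r : e <= r <= s -> 0 < r by case/andP=> er _; apply: lt_le_trans er.
have bound_ge0 : 0 <= c * antider_pow g e + K * e.
  by rewrite addr_ge0 ?mulr_ge0 ?antider_pow_ge0 // ltW.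
apply/andP; split.
  rewrite -(subrr 0); apply: (@increment_le_of_derive (cst 0) P (fun=> 0)) => //.
  by move=> r /dP_bd /andP[].
have : P s - P e <= (c * antider_pow g s + K * s) - (c * antider_pow g e + K * e).
  apply: (@increment_le_of_derive P (fun r => c * antider_pow g r + K * r) dP
    (fun r => c * (r `^ (- g) + 1) + K)) => //.
  - move=> r ers; have := is_derive_antider_pow g1 (r0 r ers) => D.
    by apply: is_derive_eq; rewrite /GRing.scale /= mulr1.
  - by move=> r /dP_bd /andP[].
by lra.
Qed.

Lemma powR_le1D (r w : R) : 0 < r -> 0 <= w <= 1 -> r `^ w <= 1 + r.
Proof.
move=> r0 /andP[w0 w1]; have [r1|r1] := leP r 1.
  have := @ge0_ler_powR R w w0 r 1; rewrite !nnegrE powR1 ltW // => /(_ isT ler01 r1).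
  by move/le_trans; apply; rewrite lerDl ltW.
by apply: le_trans (ler1_powR (ltW r1) w1) _; rewrite lerDr.
Qed.

Lemma antider_pow_le (g r : R) : 0 <= g < 1 -> 0 < r ->
  antider_pow g r <= (1 - g)^-1 + ((1 - g)^-1 + 1) * r.
Proof.
move=> /andP[g0 g1] r0; have g1' : 0 < 1 - g by rewrite subr_gt0.
have w01 : 0 <= 1 - g <= 1 by rewrite subr_ge0 (ltW g1) /= lerBlDr lerDl.
have pow_le := powR_le1D r0 w01; rewrite /antider_pow.
have : r `^ (1 - g) / (1 - g) <= (1 + r) / (1 - g) by rewrite ler_pM2r ?invr_gt0.
by rewrite mulrDl mul1r; lra.
Qed.

Lemma absorbs_antider_pow (L : R -> R) (g : R) : young L -> 0 <= g < 1 ->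
  absorbs [set r : R | 0 < r] L (antider_pow g).
Proof.
move=> YL g01; have c0 : 0 < (1 - g)^-1.
  by rewrite invr_gt0 subr_gt0; case/andP: g01.
apply: absorbs_le (fun r r0 => antider_pow_le g01 r0) _.
apply: absorbsD; first by apply: absorbs_cst => r r0; apply: young_ge0 (ltW r0).
by apply: absorbsZ (absorbs_young_id YL); rewrite ltr_wpDr.
Qed.

Lemma norm_le_of_diagonal_near0 (F : R -> R -> R) (v B : R) :
  {within [set p : R * R | 0 <= p.1 /\ 0 <= p.2], continuous (fun p => F p.1 p.2)} ->
  F 0 0 = 0 -> (exists2 d, 0 < d & forall e, 0 < e < d -> `|v - F e e| <= B) ->
  `|v| <= B.
Proof.
move=> /subspace_continuousP /(_ (0, 0) (conj (lexx 0) (lexx 0))) /cvgrPdist_le cF.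
move=> F00 [d d0 Hd]; apply/ler_addgt0Pr => eta eta0.
have := cF eta eta0; rewrite /from_subspace /= F00 /within /= => /nbhs_ballP [r /= r0 Hr].
pose e := Num.min d r / 2.
have m0 : 0 < Num.min d r by rewrite lt_min d0.
have e0 : 0 < e by rewrite divr_gt0.
have em : e < Num.min d r by rewrite ltr_pdivrMr // ltr_pMr // ltr1n.
have ed : e < d by apply: lt_le_trans em _; rewrite ge_min lexx.
have er : e < r by apply: lt_le_trans em _; rewrite ge_min lexx orbT.
have eball : ball (0, 0) r (e, e).
  by split; rewrite /ball /= sub0r normrN ger0_norm // ltW.
have := Hr (e, e) eball (conj (ltW e0) (ltW e0)); rewrite /= sub0r normrN => Fe.
have := Hd e; rewrite e0 ed => /(_ isT) vFe.
by have := ler_normD (v - F e e) (F e e); rewrite subrK; lra.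
Qed.

End Calculus.

Definition horiz_majorant (R : realType) (C alpha : R) (Ups1 : R -> R) (s : R) :=
  2 * C * antider_pow alpha s + C * Ups1 s.

Definition vert_majorant (R : realType) (C beta : R) (Gam1 Gam2 : R -> R) (s t : R) :=
  C * (Gam1 s / s + 1) * antider_pow beta t + C * Gam2 t.

Section IncrementBounds.
Variables (R : realType) (F : R -> R -> R) (a b : R) (f g : R -> R -> R).
Variables (Ups1 Ups2 Gam1 Gam2 : R -> R) (C alpha beta : R).
Hypotheses (a_ge0 : 0 <= a) (b_ge0 : 0 <= b) (C_ge0 : 0 <= C).
Hypotheses (alpha1 : alpha < 1) (beta1 : beta < 1).
Hypotheses (YU1 : young Ups1) (YU2 : young Ups2) (YG1 : young Gam1) (YG2 : young Gam2).
Hypothesis fg_gt0 : forall s t : R, 0 < s -> 0 < t -> 0 < f s t /\ 0 < g s t.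
Hypothesis F_derive : forall s t : R, 0 < s -> 0 < t ->
  is_derive s 1 (fun s' => F s' t) (a * f s t) /\
  is_derive t 1 (fun t' => F s t') (b * g s t).
Hypothesis f_le : forall s t : R, 0 < s -> 0 < t ->
  f s t <= C * ((s `^ (- alpha) + 1) * (Ups2 t / t + 1) + Ups1 s / s).
Hypothesis g_le : forall s t : R, 0 < s -> 0 < t ->
  g s t <= C * ((t `^ (- beta) + 1) * (Gam1 s / s + 1) + Gam2 t / t).
Hypothesis F_cont :
  {within [set p : R * R | 0 <= p.1 /\ 0 <= p.2], continuous (fun p => F p.1 p.2)}.
Hypothesis F00 : F 0 0 = 0.

Lemma horiz_increment_bound e s : 0 < e < s -> Ups2 e <= e ->
  0 <= F s e - F e e <= a * horiz_majorant C alpha Ups1 s.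
Proof.
move=> /andP[e0 es] Ups2e; have s0 := lt_trans e0 es.
have slope1_ge0 : 0 <= Ups1 s / s by rewrite divr_ge0 ?(young_ge0 YU1 (ltW s0)) ?(ltW s0).
have := @increment_le_antider_pow _ (fun r => F r e) (fun r => a * f r e) alpha
  (2 * a * C) (a * C * (Ups1 s / s)) e s alpha1.
have -> : 2 * a * C * antider_pow alpha s + a * C * (Ups1 s / s) * s =
  a * horiz_majorant C alpha Ups1 s by rewrite /horiz_majorant; field; rewrite gt_eqF.
have K_ge0 : 0 <= a * C * (Ups1 s / s) by apply: mulr_ge0 => //; apply: mulr_ge0.
apply; rewrite ?e0 ?es ?(mulr_ge0 (mulr_ge0 _ _)) //.
  by move=> r /andP[er _]; case: (F_derive (lt_le_trans e0 er) e0).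
move=> r /andP[er rs]; have r0 := lt_trans e0 er.
rewrite mulr_ge0 ?(ltW (proj1 (fg_gt0 r0 e0))) //=.
have -> : 2 * a * C * (r `^ (- alpha) + 1) + a * C * (Ups1 s / s) =
  a * (C * ((r `^ (- alpha) + 1) * 2 + Ups1 s / s)) by ring.
apply: ler_wpM2l => //; apply: le_trans (f_le r0 e0) _; apply: ler_wpM2l => //.
(* [Ups2 e <= e] turns the factor [Ups2 e / e + 1] of the bound on [f] into 2. *)
have slope2_le1 : Ups2 e / e <= 1 by rewrite ler_pdivrMr ?mul1r.
have := young_slope_le YU1 (_ : 0 < r <= s); rewrite r0 ltW // => /(_ isT).
have : 0 <= r `^ (- alpha) + 1 by rewrite addr_ge0 ?powR_ge0.
by nra.
Qed.

Lemma vert_increment_bound s e t : 0 < s -> 0 < e < t ->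
  0 <= F s t - F s e <= b * vert_majorant C beta Gam1 Gam2 s t.
Proof.
move=> s0 /andP[e0 et]; have t0 := lt_trans e0 et.
have slope1_ge0 : 0 <= Gam1 s / s by rewrite divr_ge0 ?(young_ge0 YG1 (ltW s0)) ?(ltW s0).
have slope2_ge0 : 0 <= Gam2 t / t by rewrite divr_ge0 ?(young_ge0 YG2 (ltW t0)) ?(ltW t0).
have c_ge0 : 0 <= b * C * (Gam1 s / s + 1).
  by apply: mulr_ge0; [exact: mulr_ge0 | exact: addr_ge0].
have K_ge0 : 0 <= b * C * (Gam2 t / t) by apply: mulr_ge0 => //; apply: mulr_ge0.
have := @increment_le_antider_pow _ (fun r => F s r) (fun r => b * g s r) beta
  (b * C * (Gam1 s / s + 1)) (b * C * (Gam2 t / t)) e t beta1.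
have -> : b * C * (Gam1 s / s + 1) * antider_pow beta t + b * C * (Gam2 t / t) * t =
  b * vert_majorant C beta Gam1 Gam2 s t by rewrite /vert_majorant; field; rewrite !gt_eqF.
apply; rewrite ?e0 ?et //.
  by move=> r /andP[er _]; case: (F_derive s0 (lt_le_trans e0 er)).
move=> r /andP[er rt]; have r0 := lt_trans e0 er.
rewrite mulr_ge0 ?(ltW (proj2 (fg_gt0 s0 r0))) //=.
have -> : b * C * (Gam1 s / s + 1) * (r `^ (- beta) + 1) + b * C * (Gam2 t / t) =
  b * (C * ((r `^ (- beta) + 1) * (Gam1 s / s + 1) + Gam2 t / t)) by ring.
apply: ler_wpM2l => //; apply: le_trans (g_le s0 r0) _; apply: ler_wpM2l => //.
by rewrite lerD2l young_slope_le // r0 ltW.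
Qed.

Lemma norm_le_majorants s t : 0 < s -> 0 < t ->
  `|F s t| <= a * horiz_majorant C alpha Ups1 s + b * vert_majorant C beta Gam1 Gam2 s t.
Proof.
move=> s0 t0; apply: norm_le_of_diagonal_near0 F_cont F00 _.
have [d d0 Ups2_le] := young_sublinear0 YU2 ltr01.
exists (Num.min (Num.min s t) d) => [|e]; first by rewrite !lt_min s0 t0 d0.
move=> /andP[e0]; rewrite !lt_min => /andP[/andP[es et] ed].
have Ups2e : Ups2 e <= e by rewrite -[X in _ <= X]mul1r Ups2_le // e0 ed.
have ees : 0 < e < s by rewrite e0.
have eet : 0 < e < t by rewrite e0.
have /andP[h_ge0 h_le] := horiz_increment_bound ees Ups2e.
have /andP[v_ge0 v_le] := vert_increment_bound s0 eet.
by rewrite ger0_norm; lra.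
Qed.

End IncrementBounds.

Section MajorantAbsorption.
Variables (R : realType) (Phi Psi : R -> R).
Hypotheses (YPhi : young Phi) (YPsi : young Psi).

Local Notation quadrant := [set p : R * R | 0 < p.1 /\ 0 < p.2].
Local Notation V := (fun p : R * R => Phi p.1 + Psi p.2).

Lemma absorbs_fst (Q : R -> R) :
  absorbs [set r : R | 0 < r] Phi Q -> absorbs quadrant V (Q \o fst).
Proof.
apply: (absorbs_comp (c := 0)) => [p [] //|p [_ t0]].
by rewrite addr0 lerDl young_ge0 // ltW.
Qed.

Lemma absorbs_snd (Q : R -> R) :
  absorbs [set r : R | 0 < r] Psi Q -> absorbs quadrant V (Q \o snd).
Proof.
apply: (absorbs_comp (c := 0)) => [p [] //|p [s0 _]].
by rewrite addr0 lerDr young_ge0 // ltW.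
Qed.

Lemma absorbs_horiz_majorant (Ups1 : R -> R) (C alpha : R) :
  young Ups1 -> lless Ups1 Phi -> 0 < C -> 0 <= alpha < 1 ->
  absorbs quadrant V (horiz_majorant C alpha Ups1 \o fst).
Proof.
move=> YU1 llU C0 alpha01; apply: absorbs_fst; rewrite /horiz_majorant.
apply: absorbsD; apply: absorbsZ; rewrite ?mulr_gt0 //.
- exact: absorbs_antider_pow.
- exact: absorbs_lless.
Qed.

Lemma absorbs_vert_majorant (Gam1 Gam2 : R -> R) (C beta : R) :
  young Gam1 -> young Gam2 -> lless Gam2 Psi ->
  lless (young_conj Psi) (Phi \o young_inv Gam1 \o young_conj Gam1) ->
  0 < C -> 0 <= beta < 1 ->
  absorbs quadrant V (fun p => vert_majorant C beta Gam1 Gam2 p.1 p.2).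
Proof.
move=> YG1 YG2 llG llS C0 beta01; pose c := (1 - beta)^-1 + 1.
have c_gt0 : 0 < c by rewrite ltr_wpDl // invr_ge0 subr_ge0 ltW //; case/andP: beta01.
have V_ge0 p : quadrant p -> 0 <= V p.
  by case: p => s t [/= s0 t0]; rewrite addr_ge0 ?young_ge0 ?ltW.
have cross := absorbs_cross YPhi YPsi YG1 llS.
have slope : absorbs quadrant V (fun p => Gam1 p.1 / p.1).
  apply: absorbs_le (absorbs_comp (m := fun p => (p.1, 1)) (c := Psi 1) _ _ cross).
  - by move=> p _ /=; rewrite mul1r.
  - by move=> p [s0 _]; split.
  - by move=> p [_ t0] /=; rewrite lerD2r lerDl young_ge0 // ltW.
apply: (absorbs_le (Q := fun p => C * c * (Gam1 p.1 / p.1 + p.2 * (Gam1 p.1 / p.1) + 1 + p.2)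
  + C * Gam2 p.2)).
  move=> [s t] [/= s0 t0]; rewrite /vert_majorant lerD2r.
  have slope_ge0 : 0 <= Gam1 s / s by rewrite divr_ge0 ?(young_ge0 YG1 (ltW s0)) ?(ltW s0).
  have antider_le : antider_pow beta t <= c * (1 + t).
    by have := antider_pow_le beta01 t0; rewrite /c; lra.
  have := ler_wpM2l (_ : 0 <= C * (Gam1 s / s + 1)) antider_le.
  by move=> /(_ (mulr_ge0 (ltW C0) (addr_ge0 slope_ge0 ler01)))/le_trans; apply; lra.
apply: absorbsD; apply: absorbsZ; rewrite ?mulr_gt0 //.
  apply: absorbsD; last exact: (absorbs_snd (absorbs_young_id YPsi)).
  by apply: absorbsD; [exact: absorbsD | exact: absorbs_cst].
exact: (absorbs_snd (absorbs_lless YG2 YPsi llG)).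
Qed.

End MajorantAbsorption.

Unset Implicit Arguments.
Set Strict Implicit.
Set Printing Implicit Defensive.

Theorem lemma4p1 (R : realType) (N : nat) (Phi Psi : R -> R)
  (f g : R -> R -> R) (h k : 'rV[R]_N -> R) (H : 'rV[R]_N -> R -> R -> R)
  (Ups1 Ups2 Gam1 Gam2 : R -> R) (C alpha beta : R) :
  (2 <= N)%N ->
  (* standing assumptions on Phi, Psi, f, g, h, k *)
  young Phi -> young Psi ->
  (forall s t, 0 < s -> 0 < t -> 0 < f s t /\ 0 < g s t) ->
  {within [set p : R * R | 0 < p.1 /\ 0 < p.2], continuous (fun p => f p.1 p.2)} ->
  {within [set p : R * R | 0 < p.1 /\ 0 < p.2], continuous (fun p => g p.1 p.2)} ->
  RN_measurable h -> RN_measurable k ->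
  (forall x, 0 < h x) -> (forall x, 0 < k x) ->
  (* (H1) *)
  C2_pos Phi -> C2_pos Psi -> index_bounds Phi -> index_bounds Psi ->
  (Order.max (sindex Phi) (sindex Psi) < (N%:R)%:E)%E ->
  (* (H2)(i) *)
  (forall s t, 0 < s -> 0 < t -> RN_measurable (fun x => H x s t)) ->
  (forall x, {within [set p : R * R | 0 <= p.1 /\ 0 <= p.2],
               continuous (fun p => H x p.1 p.2)}) ->
  (forall (x : 'rV[R]_N) (s t : R), 0 < s -> 0 < t ->
      is_derive s 1 (fun s' => H x s' t) (h x * f s t) /\
      is_derive t 1 (fun t' => H x s t') (k x * g s t)) ->
  (forall x, H x 0 0 = 0) ->
  (* (H2)(ii) *)
  young Ups1 -> young Ups2 -> young Gam1 -> young Gam2 ->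
  (forall t, 0 < t -> derivable Ups1 t 1 /\ derivable Ups2 t 1 /\
                       derivable Gam1 t 1 /\ derivable Gam2 t 1) ->
  lless Ups1 Phi -> lless Gam2 Psi ->
  0 < C -> 0 < alpha < 1 -> 0 < beta < 1 ->
  (forall s t, 0 < s -> 0 < t ->
     f s t <= C * ((s `^ (- alpha) + 1) * (Ups2 t / t + 1) + Ups1 s / s)) ->
  (forall s t, 0 < s -> 0 < t ->
     g s t <= C * ((t `^ (- beta) + 1) * (Gam1 s / s + 1) + Gam2 t / t)) ->
  lless (young_conj Phi) (Psi \o young_inv Ups2 \o young_conj Ups2) ->
  lless (young_conj Psi) (Phi \o young_inv Gam1 \o young_conj Gam1) ->
  (* conclusion, with l := h + k *)
  forall sigma : R, 0 < sigma ->
    exists Cs : R, 0 < Cs /\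
      forall (x : 'rV[R]_N) (s t : R), 0 < s -> 0 < t ->
        `|H x s t| <= (h x + k x) * (sigma * (Phi s + Psi t) + Cs).
Proof.
move=> _ YPhi YPsi fg_gt0 _ _ _ _ h_gt0 k_gt0 _ _ _ _ _ _ H_cont H_derive H00.
move=> YU1 YU2 YG1 YG2 _ llU llG C0 /andP[alpha0 alpha1] /andP[beta0 beta1].
move=> f_le g_le _ llS sigma sigma0.
have alpha01 : 0 <= alpha < 1 by rewrite (ltW alpha0).
have beta01 : 0 <= beta < 1 by rewrite (ltW beta0).
have absorbs_majorants := absorbs_max
  (absorbs_horiz_majorant YPhi YPsi YU1 llU C0 alpha01)
  (absorbs_vert_majorant YPhi YPsi YG1 YG2 llG llS C0 beta01).
have [Cs Cs0 majorants_le] := absorbs_gt0 absorbs_majorants sigma0.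
exists Cs; split => // x s t s0 t0.
have := majorants_le (s, t) (conj s0 t0); rewrite /= ge_max => /andP[horiz_le vert_le].
apply: le_trans (norm_le_majorants (ltW (h_gt0 x)) (ltW (k_gt0 x)) (ltW C0) alpha1 beta1
  YU1 YU2 YG1 YG2 fg_gt0 (H_derive x) f_le g_le (H_cont x) (H00 x) s0 t0) _.
by rewrite mulrDl lerD // ler_wpM2l // ltW.
Qed.
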